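(* Let $0<\beta_1<\beta_2$, let $g_{\mathrm{Foot},\beta_1,\beta_2}$ be the football soliton of the context, written on $S^2\setminus\{N,S\}$ as $g=\frac{1}{2\varphi(\tau)}d\tau\otimes d\tau+2\varphi(\tau)d\theta\otimes d\theta$ with $\tau\in(0,\beta_1+\beta_2)$, and let $a=a(\beta_1,\beta_2)$ be as in the context. Set $u=a(\beta_1+\beta_2-\tau)\in[0,a(\beta_1+\beta_2)]$ and regard $\varphi$ as a function of $u$. Then for every $L>0$ and every integer $k\ge0$, $$\frac{a}{\beta_2}\varphi(u)\longrightarrow\frac{e^u-1}{e^u}$$ uniformly in $C^k([0,L])$ as $\beta_1/\beta_2\to0$ (considering only $(\beta_1,\beta_2)$ with $L<a(\beta_1+\beta_2)$).
   Context: Regard $S^2=\mathbb{C}\cup\{\infty\}$ as the Riemann sphere with $N=\{z=0\}$, $S=\{z=\infty\}$, $z=|z|e^{i\theta}$. For $0<\beta_1<\beta_2$, the football soliton $g_{\mathrm{Foot},\beta_1,\beta_2}$ is the unique Riemannian metric on $S^2\setminus\{N,S\}$, compatible with the complex structure, with conical singularities of angle $2\pi\beta_1$ at $N$ and $2\pi\beta_2$ at $S$, of area $2\pi(\beta_1+\beta_2)$, whose Kähler form $\omega$ satisfies $\mathrm{Ric}\,\omega=\omega-\mathcal{L}_X\omega+2\pi(1-\beta_1)\delta_N+2\pi(1-\beta_2)\delta_S$ for a gradient vector field $X$. It is rotationally symmetric: $\omega=\sqrt{-1}\partial\bar\partial f(s)$ on $\mathbb{C}^*$ with $s=\log|z|^2$,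 $f$ strictly convex; $\tau=f'(s)$ (normalized so $\tau\in(0,\beta_1+\beta_2)$, $\tau\to0$ at $N$) and $\varphi(\tau)=f''(s)$. The number $a=a(\beta_1,\beta_2)$ is the unique element of $(0,1/\beta_1)$ with $a\beta_1-1+(a\beta_2+1)e^{-a(\beta_1+\beta_2)}=0$. *)

From Stdlib Require Import Reals.
From Coquelicot Require Import Coquelicot.
Open Scope R_scope.

Definition football_a (b1 b2 a : R) : Prop :=
  0 < a < 1 / b1 /\
  a * b1 - 1 + (a * b2 + 1) * exp (- (a * (b1 + b2))) = 0.

(* Momentum profile phi(tau) = f''(s) of the football soliton with cone
   angles 2 pi b1 at N (tau = 0) and 2 pi b2 at S (tau = b1 + b2).
   In momentum coordinates, omega = i dd^c f(s), Ric omega = -i dd^c log f'',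
   and the soliton equation Ric omega = omega - L_X omega (X rotationally
   symmetric holomorphic gradient field) reduces, after one s-derivative,
   to  phi'(tau) = -tau + c phi(tau) + b  for real constants c, b
   (c encodes X, b a pluriharmonic ambiguity). The conical singularities
   (angles 2 pi b1, 2 pi b2; metric g = dtau^2/(2 phi) + 2 phi dtheta^2)
   are encoded by phi(0)=phi(b1+b2)=0, phi'(0)=b1, phi'(b1+b2)=-b2, and
   positivity of the metric by phi > 0 on (0, b1+b2).  phi is taken as the
   (real-analytic) ODE solution on all of R, so that derivatives at the
   endpoint tau = b1 + b2 (u = 0) make sense. *)
Definition football_profile (b1 b2 : R) (phi : R -> R) : Prop :=
  (exists c b : R, forall t : R, is_derive phi t (- t + c * phi t + b)) /\
  phi 0 = 0 /\ phi (b1 + b2) = 0 /\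
  Derive phi 0 = b1 /\ Derive phi (b1 + b2) = - b2 /\
  (forall t : R, 0 < t < b1 + b2 -> 0 < phi t).

Definition rescaled_profile (b1 b2 a : R) (phi : R -> R) (u : R) : R :=
  a / b2 * phi (b1 + b2 - u / a).

Definition limit_profile (u : R) : R := (exp u - 1) / exp u.

From Stdlib Require Import Reals Lra Psatz.
From Coquelicot Require Import Coquelicot.
Open Scope R_scope.

(* The soliton equation phi' = -tau + c phi + b integrates in closed form.  With
   phi(0) = 0, phi'(0) = b1 the solution is explicit, and phi(b1 + b2) = 0 forces
   c to be a nonzero root of (1 - b1 x) e^{x (b1 + b2)} = 1 + b2 x.  The ratio of
   the two sides equals 1 at x = 0, exceeds 1 elsewhere up to the critical point
   (b2 - b1)/(b1 b2) and decreases strictly beyond it, so there is a single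
   nonzero root and c = a.  In the variable u the rescaled profile is then
   (1 + m)(1 - e^{-u}) - m u with m = 1/(a b2), whose derivatives all lie within
   3 m (1 + L) of those of 1 - e^{-u} on [0, L].  Finally a (b1 + b2) > L bounds
   a b1 below by 1 - (1 + L) e^{-L} > 0, so m <= (b1 / b2) / (1 - (1 + L) e^{-L})
   tends to 0 with b1 / b2. *)

Lemma derive_pos_strict_incr (f df : R -> R) (x y : R) :
  x < y ->
  (forall t, x <= t <= y -> is_derive f t (df t)) ->
  (forall t, x < t < y -> 0 < df t) -> f x < f y.
Proof.
  intros Hxy Hd Hpos.
  destruct (MVT_cor2 f df x y Hxy) as [c [Heq Hc]].
  { intros t Ht. apply is_derive_Reals, Hd, Ht. }
  assert (0 < df c * (y - x)) by (apply Rmult_lt_0_compat; [apply Hpos, Hc | lra]).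
  lra.
Qed.

Lemma derive_neg_strict_decr (f df : R -> R) (x y : R) :
  x < y ->
  (forall t, x <= t <= y -> is_derive f t (df t)) ->
  (forall t, x < t < y -> df t < 0) -> f y < f x.
Proof.
  intros Hxy Hd Hneg.
  assert (- f x < - f y); [|lra].
  apply (derive_pos_strict_incr (fun t => - f t) (fun t => - df t)); [exact Hxy | |].
  - intros t Ht. apply (is_derive_opp f), Hd, Ht.
  - intros t Ht. specialize (Hneg t Ht). lra.
Qed.

Lemma derive_zero_const (f : R -> R) (x y : R) :
  (forall t, is_derive f t 0) -> f x = f y.
Proof.
  intros Hd.
  assert (Hlt : forall s t, s < t -> f s = f t).
  { intros s t Hst.
    destruct (MVT_cor2 f (fun _ => 0) s t Hst) as [c [Heq _]]; [|lra].
    intros r _. apply is_derive_Reals, Hd. }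
  destruct (Rtotal_order x y) as [H | [-> | H]];
    [apply Hlt, H | reflexivity | symmetry; apply Hlt, H].
Qed.

Lemma linear_ode_unique (c : R) (g f h : R -> R) :
  (forall t, is_derive f t (c * f t + g t)) ->
  (forall t, is_derive h t (c * h t + g t)) ->
  f 0 = h 0 -> forall t, f t = h t.
Proof.
  intros Hf Hh H0 t.
  set (v := fun s => exp (- c * s) * (f s - h s)).
  assert (Hv : forall s, is_derive v s 0).
  { intro s. unfold v. auto_derive.
    - split; [exists (c * f s + g s) | split; [exists (c * h s + g s) | easy]]; auto.
    - change (Derive (fun x => f x) s) with (Derive f s).
      change (Derive (fun x => h x) s) with (Derive h s).
      rewrite (is_derive_unique _ _ _ (Hf s)), (is_derive_unique _ _ _ (Hh s)). ring. }
  assert (Hvt : v t = 0).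
  { rewrite (derive_zero_const v t 0 Hv). unfold v. rewrite H0. ring. }
  unfold v in Hvt. pose proof (exp_pos (- c * t)).
  destruct (Rmult_integral _ _ Hvt); lra.
Qed.

Definition soliton_ode_sol (b c t : R) : R :=
  (1 - b * c) / c ^ 2 * (1 - exp (c * t)) + t / c.

Lemma soliton_ode_sol_derive (b c t : R) : c <> 0 ->
  is_derive (soliton_ode_sol b c) t (c * soliton_ode_sol b c t + (- t + b)).
Proof. intro Hc. unfold soliton_ode_sol. auto_derive; [easy | field; exact Hc]. Qed.

Definition football_secular (b1 b2 x : R) : Prop :=
  (1 - b1 * x) * exp (x * (b1 + b2)) = 1 + b2 * x.

Lemma football_profile_closed_form (b1 b2 : R) (phi : R -> R) :
  0 < b1 + b2 -> b1 <> b2 -> football_profile b1 b2 phi ->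
  exists c, c <> 0 /\ football_secular b1 b2 c /\
    forall t, phi t = soliton_ode_sol b1 c t.
Proof.
  intros HT Hb [[c [b Hd]] [Hp0 [HpT [Hd0 _]]]].
  assert (Hd' : forall t, is_derive phi t (c * phi t + (- t + b))).
  { intro t. replace (c * phi t + (- t + b)) with (- t + c * phi t + b) by ring. apply Hd. }
  assert (Hb1 : b = b1).
  { rewrite (is_derive_unique _ _ _ (Hd 0)), Hp0 in Hd0. lra. }
  subst b.
  destruct (Req_dec c 0) as [-> | Hc].
  - exfalso.
    assert (Hphi : forall t, phi t = - t ^ 2 / 2 + b1 * t).
    { apply (linear_ode_unique 0 (fun t => - t + b1) phi (fun t => - t ^ 2 / 2 + b1 * t));
        [exact Hd' | | rewrite Hp0; field].
      intro t. auto_derive; [easy | field]. }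
    rewrite Hphi in HpT.
    assert (Hprod : (b1 + b2) * (b2 - b1) = 0) by lra.
    destruct (Rmult_integral _ _ Hprod); lra.
  - assert (Hphi : forall t, phi t = soliton_ode_sol b1 c t).
    { apply (linear_ode_unique c (fun t => - t + b1) phi (soliton_ode_sol b1 c));
        [exact Hd' | | ].
      - intro t. apply soliton_ode_sol_derive, Hc.
      - rewrite Hp0. unfold soliton_ode_sol. rewrite Rmult_0_r, exp_0. field. exact Hc. }
    exists c. split; [exact Hc | split; [| exact Hphi]].
    rewrite Hphi in HpT. unfold soliton_ode_sol in HpT. unfold football_secular.
    apply (Rmult_eq_compat_l (c ^ 2)) in HpT. field_simplify in HpT; [| exact Hc].
    nra.
Qed.

Definition football_ratio (b1 b2 x : R) : R :=
  (1 - b1 * x) * exp (x * (b1 + b2)) / (1 + b2 * x).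

Definition football_ratio_weight (b1 b2 x : R) : R :=
  exp (x * (b1 + b2)) * (b1 + b2) / (1 + b2 * x) ^ 2.

Lemma football_ratio_derive (b1 b2 x : R) : 1 + b2 * x <> 0 ->
  is_derive (football_ratio b1 b2) x
    (football_ratio_weight b1 b2 x * (x * ((b2 - b1) - b1 * b2 * x))).
Proof.
  intro Hx. unfold football_ratio, football_ratio_weight.
  auto_derive; [exact Hx | field; exact Hx].
Qed.

Lemma football_ratio_weight_pos (b1 b2 x : R) :
  0 < b1 + b2 -> 1 + b2 * x <> 0 -> 0 < football_ratio_weight b1 b2 x.
Proof.
  intros HT Hx. unfold football_ratio_weight.
  apply Rdiv_lt_0_compat; [apply Rmult_lt_0_compat; [apply exp_pos | exact HT] |].
  apply pow2_gt_0, Hx.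
Qed.

Lemma football_ratio_0 (b1 b2 : R) : football_ratio b1 b2 0 = 1.
Proof. unfold football_ratio. rewrite Rmult_0_l, exp_0. field. Qed.

Lemma football_ratio_gt_1 (b1 b2 x : R) :
  0 < b1 < b2 -> x <> 0 -> 0 < 1 + b2 * x -> b1 * b2 * x <= b2 - b1 ->
  1 < football_ratio b1 b2 x.
Proof.
  intros [Hb1 Hb12] Hx0 Hx Hsmall.
  rewrite <- (football_ratio_0 b1 b2).
  assert (Hdom : forall t, Rmin x 0 <= t -> 1 + b2 * t <> 0).
  { intros t Ht. unfold Rmin in Ht. destruct (Rle_dec x 0); nra. }
  destruct (Rlt_or_le x 0) as [Hneg | Hpos].
  - apply (derive_neg_strict_decr _
      (fun t => football_ratio_weight b1 b2 t * (t * ((b2 - b1) - b1 * b2 * t))) x 0 Hneg).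
    + intros t Ht. apply football_ratio_derive, Hdom. rewrite Rmin_left; lra.
    + intros t Ht.
      assert (0 < football_ratio_weight b1 b2 t)
        by (apply football_ratio_weight_pos; [lra | apply Hdom; rewrite Rmin_left; lra]).
      assert (0 < (b2 - b1) - b1 * b2 * t) by nra.
      assert (t * ((b2 - b1) - b1 * b2 * t) < 0) by nra.
      nra.
  - apply (derive_pos_strict_incr _
      (fun t => football_ratio_weight b1 b2 t * (t * ((b2 - b1) - b1 * b2 * t))) 0 x); [lra | |].
    + intros t Ht. apply football_ratio_derive, Hdom. rewrite Rmin_right; lra.
    + intros t Ht.
      assert (0 < football_ratio_weight b1 b2 t)
        by (apply football_ratio_weight_pos; [lra | apply Hdom; rewrite Rmin_right; lra]).
      assert (b1 * b2 * t < b1 * b2 * x) by (apply Rmult_lt_compat_l; nra).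
      assert (0 < t * ((b2 - b1) - b1 * b2 * t)) by (apply Rmult_lt_0_compat; lra).
      nra.
Qed.

Lemma football_ratio_strict_decr (b1 b2 x y : R) :
  0 < b1 < b2 -> b2 - b1 < b1 * b2 * x -> x < y ->
  football_ratio b1 b2 y < football_ratio b1 b2 x.
Proof.
  intros [Hb1 Hb12] Hlarge Hxy.
  assert (Hb : 0 < b1 * b2) by nra.
  assert (Hx : 0 < x) by (destruct (Rlt_or_le 0 x); [assumption | nra]).
  apply (derive_neg_strict_decr _
    (fun t => football_ratio_weight b1 b2 t * (t * ((b2 - b1) - b1 * b2 * t))) x y Hxy).
  - intros t Ht. apply football_ratio_derive. nra.
  - intros t Ht.
    assert (0 < football_ratio_weight b1 b2 t)
      by (apply football_ratio_weight_pos; nra).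
    assert (b1 * b2 * x < b1 * b2 * t) by (apply Rmult_lt_compat_l; nra).
    assert (0 < t * (b1 * b2 * t - (b2 - b1))) by (apply Rmult_lt_0_compat; lra).
    nra.
Qed.

Lemma football_secular_unique (b1 b2 x y : R) :
  0 < b1 < b2 -> x <> 0 -> y <> 0 ->
  football_secular b1 b2 x -> football_secular b1 b2 y -> x = y.
Proof.
  intros Hb Hx0 Hy0 Hx Hy.
  assert (Hroot : forall z, z <> 0 -> football_secular b1 b2 z ->
            b2 - b1 < b1 * b2 * z /\ football_ratio b1 b2 z = 1).
  { intros z Hz0 Hz. unfold football_secular in Hz.
    assert (Hzpos : 0 < 1 + b2 * z).
    { destruct (Rlt_or_le 0 (1 + b2 * z)) as [H | H]; [exact H | exfalso].
      pose proof (exp_pos (z * (b1 + b2))).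
      assert (0 < (1 - b1 * z) * exp (z * (b1 + b2))) by (apply Rmult_lt_0_compat; nra).
      lra. }
    assert (Hratio : football_ratio b1 b2 z = 1)
      by (unfold football_ratio; rewrite Hz; field; lra).
    split; [| exact Hratio].
    destruct (Rlt_or_le (b2 - b1) (b1 * b2 * z)) as [H | H]; [exact H | exfalso].
    pose proof (football_ratio_gt_1 b1 b2 z Hb Hz0 Hzpos H). lra. }
  destruct (Hroot x Hx0 Hx) as [Hxl Hxr], (Hroot y Hy0 Hy) as [Hyl Hyr].
  destruct (Rtotal_order x y) as [H | [H | H]]; [exfalso | exact H | exfalso].
  - pose proof (football_ratio_strict_decr b1 b2 x y Hb Hxl H). lra.
  - pose proof (football_ratio_strict_decr b1 b2 y x Hb Hyl H). lra.
Qed.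

Lemma football_a_secular (b1 b2 a : R) :
  football_a b1 b2 a -> football_secular b1 b2 a.
Proof.
  intros [_ Ha]. unfold football_secular.
  assert (Hinv : exp (- (a * (b1 + b2))) * exp (a * (b1 + b2)) = 1)
    by (rewrite <- exp_plus, Rplus_opp_l; apply exp_0).
  assert (H : (a * b1 - 1) * exp (a * (b1 + b2))
              + (a * b2 + 1) * (exp (- (a * (b1 + b2))) * exp (a * (b1 + b2))) = 0)
    by (rewrite <- (Rmult_0_l (exp (a * (b1 + b2)))), <- Ha; ring).
  rewrite Hinv in H. lra.
Qed.

Definition exp_affine (p q r u : R) : R := p + q * u + r * exp (- u).

Lemma Derive_exp_affine (p q r u : R) :
  Derive (exp_affine p q r) u = exp_affine q 0 (- r) u.
Proof. apply is_derive_unique. unfold exp_affine. auto_derive; [easy | ring]. Qed.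

Lemma Derive_n_S_exp_affine (j : nat) (p q r u : R) :
  Derive_n (exp_affine p q r) (S j) u = Derive_n (exp_affine q 0 (- r)) j u.
Proof.
  rewrite <- (Derive_n_ext _ _ j u (Derive_exp_affine p q r)).
  change (Derive (exp_affine p q r)) with (Derive_n (exp_affine p q r) 1).
  rewrite Derive_n_comp. f_equal. lia.
Qed.

Lemma Derive_n_exp_affine_dist (L : R) (j : nat) :
  forall p q r p' q' r' u, 0 <= u <= L ->
  Rabs (Derive_n (exp_affine p q r) j u - Derive_n (exp_affine p' q' r') j u)
    <= (Rabs (p - p') + Rabs (q - q') + Rabs (r - r')) * (1 + L).
Proof.
  induction j as [| j IH]; intros p q r p' q' r' u Hu.
  - simpl. unfold exp_affine.
    replace (p + q * u + r * exp (- u) - (p' + q' * u + r' * exp (- u)))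
      with ((p - p') + (q - q') * u + (r - r') * exp (- u)) by ring.
    assert (He : exp (- u) <= 1).
    { rewrite <- exp_0. destruct (Req_dec u 0) as [-> | Hu0].
      - rewrite Ropp_0. lra.
      - apply Rlt_le, exp_increasing. lra. }
    pose proof (exp_pos (- u)).
    pose proof (Rabs_pos (p - p')). pose proof (Rabs_pos (q - q')). pose proof (Rabs_pos (r - r')).
    eapply Rle_trans; [apply Rabs_triang |].
    rewrite Rabs_mult, (Rabs_pos_eq (exp (- u))) by lra.
    eapply Rle_trans; [apply Rplus_le_compat_r, Rabs_triang |].
    rewrite Rabs_mult, (Rabs_pos_eq u) by lra.
    nra.
  - rewrite !Derive_n_S_exp_affine.
    eapply Rle_trans; [apply IH, Hu |].
    replace (0 - 0) with 0 by ring. replace (- r - - r') with (- (r - r')) by ring.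
    rewrite Rabs_R0, Rabs_Ropp.
    pose proof (Rabs_pos (p - p')).
    apply Rmult_le_compat_r; lra.
Qed.

Lemma football_rescaled_profile (b1 b2 a : R) (phi : R -> R) :
  0 < b1 < b2 -> football_a b1 b2 a -> football_profile b1 b2 phi ->
  forall u, rescaled_profile b1 b2 a phi u =
    exp_affine (1 + 1 / (a * b2)) (- (1 / (a * b2))) (- (1 + 1 / (a * b2))) u.
Proof.
  intros Hb Ha Hphi u.
  destruct (football_profile_closed_form b1 b2 phi) as [c [Hc0 [Hc Hsol]]];
    [lra | lra | exact Hphi |].
  pose proof (football_a_secular b1 b2 a Ha) as Hsec.
  destruct Ha as [[Ha0 Ha1] _].
  assert (Hab1 : a * b1 < 1).
  { apply (Rmult_lt_compat_r b1) in Ha1; [| lra]. unfold Rdiv in Ha1.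
    rewrite Rmult_1_l, Rinv_l in Ha1 by lra. exact Ha1. }
  assert (Hac : a = c) by (apply (football_secular_unique b1 b2); auto; lra).
  subst c.
  unfold rescaled_profile, exp_affine. rewrite Hsol. unfold soliton_ode_sol.
  replace (a * (b1 + b2 - u / a)) with (a * (b1 + b2) + - u) by (field; lra).
  rewrite exp_plus.
  unfold football_secular in Hsec.
  replace (exp (a * (b1 + b2))) with ((1 + b2 * a) / (1 - b1 * a))
    by (rewrite <- Hsec; field; lra).
  field. repeat split; lra.
Qed.

Lemma limit_profile_exp_affine (u : R) : limit_profile u = exp_affine 1 0 (-1) u.
Proof.
  unfold limit_profile, exp_affine. rewrite exp_Ropp.
  field. apply Rgt_not_eq, exp_pos.
Qed.

Lemma one_plus_mul_exp_neg_antitone (L x : R) :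
  0 <= L <= x -> (1 + x) * exp (- x) <= (1 + L) * exp (- L).
Proof.
  intros Hx.
  assert (Hsplit : exp (- L) = exp (x - L) * exp (- x))
    by (rewrite <- exp_plus; f_equal; ring).
  rewrite Hsplit.
  pose proof (exp_pos (- x)). pose proof (exp_ineq1_le (x - L)).
  assert (1 + x <= (1 + L) * (1 + (x - L))) by nra.
  assert ((1 + L) * (1 + (x - L)) <= (1 + L) * exp (x - L)) by (apply Rmult_le_compat_l; lra).
  rewrite <- Rmult_assoc. apply Rmult_le_compat_r; lra.
Qed.

Lemma one_plus_mul_exp_neg_lt_1 (L : R) : L <> 0 -> (1 + L) * exp (- L) < 1.
Proof.
  intros HL.
  assert (Hinv : exp L * exp (- L) = 1) by (rewrite <- exp_plus, Rplus_opp_r; apply exp_0).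
  pose proof (exp_ineq1 L HL). pose proof (exp_pos (- L)).
  nra.
Qed.

Lemma football_a_mul_b1_lower (b1 b2 a L : R) :
  0 < b1 -> 0 <= L -> football_a b1 b2 a -> L < a * (b1 + b2) ->
  1 - (1 + L) * exp (- L) <= a * b1.
Proof.
  intros Hb1 HL Ha HaT.
  pose proof (football_a_secular b1 b2 a Ha) as Hsec. unfold football_secular in Hsec.
  destruct Ha as [[Ha0 _] _].
  set (x := a * (b1 + b2)) in *.
  assert (Hinv : exp x * exp (- x) = 1) by (rewrite <- exp_plus, Rplus_opp_r; apply exp_0).
  assert (H1 : (1 - a * b1) <= (1 + x) * exp (- x)).
  { assert (Hle : (1 - b1 * a) * exp x <= 1 + x) by (rewrite Hsec; unfold x; nra).
    apply (Rmult_le_compat_r (exp (- x))) in Hle; [| apply Rlt_le, exp_pos].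
    rewrite Rmult_assoc, Hinv in Hle. lra. }
  pose proof (one_plus_mul_exp_neg_antitone L x). lra.
Qed.

Lemma football_inv_a_b2_bound (b1 b2 a L : R) :
  0 < b1 -> 0 < b2 -> 0 <= L -> football_a b1 b2 a -> L < a * (b1 + b2) ->
  1 / (a * b2) * (1 - (1 + L) * exp (- L)) <= b1 / b2.
Proof.
  intros Hb1 Hb2 HL Ha HaT.
  pose proof (football_a_mul_b1_lower b1 b2 a L Hb1 HL Ha HaT) as Hlow.
  destruct Ha as [[Ha0 _] _].
  replace (b1 / b2) with (1 / (a * b2) * (a * b1)) by (field; lra).
  apply Rmult_le_compat_l; [apply Rlt_le, Rdiv_lt_0_compat; nra | exact Hlow].
Qed.

Theorem lemma2p3 :
  forall (L : R), 0 < L ->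
  forall (k : nat) (eps : R), 0 < eps ->
  exists delta : R, 0 < delta /\
    forall (b1 b2 a : R) (phi : R -> R),
      0 < b1 -> b1 < b2 -> b1 / b2 < delta ->
      football_a b1 b2 a -> L < a * (b1 + b2) ->
      football_profile b1 b2 phi ->
      forall (j : nat) (u : R), (j <= k)%nat -> 0 <= u <= L ->
        Rabs (Derive_n (rescaled_profile b1 b2 a phi) j u
              - Derive_n limit_profile j u) < eps.
Proof.
  intros L HL k eps Heps.
  set (kappa := 1 - (1 + L) * exp (- L)).
  assert (Hkappa : 0 < kappa) by (pose proof (one_plus_mul_exp_neg_lt_1 L); unfold kappa; lra).
  exists (kappa * eps / (3 * (1 + L))). split; [apply Rdiv_lt_0_compat; nra |].
  intros b1 b2 a phi Hb1 Hb12 Hratio Ha HaT Hphi j u _ Hu.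
  rewrite (Derive_n_ext _ _ j u (football_rescaled_profile b1 b2 a phi (conj Hb1 Hb12) Ha Hphi)),
    (Derive_n_ext _ _ j u limit_profile_exp_affine).
  set (m := 1 / (a * b2)).
  assert (Hm : m * kappa <= b1 / b2)
    by (apply football_inv_a_b2_bound; [lra | lra | lra | exact Ha | exact HaT]).
  assert (Hm0 : 0 < m) by (unfold m; destruct Ha as [[Ha0 _] _]; apply Rdiv_lt_0_compat; nra).
  eapply Rle_lt_trans; [apply Derive_n_exp_affine_dist, Hu |].
  replace (1 + m - 1) with m by ring. replace (- m - 0) with (- m) by ring.
  replace (- (1 + m) - -1) with (- m) by ring.
  rewrite Rabs_Ropp, Rabs_pos_eq by lra.
  assert (Hm' : m * kappa * (3 * (1 + L)) < kappa * eps).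
  { apply (Rmult_lt_compat_r (3 * (1 + L))) with (r1 := b1 / b2) in Hratio; [| lra].
    replace (kappa * eps / (3 * (1 + L)) * (3 * (1 + L))) with (kappa * eps) in Hratio
      by (field; lra).
    nra. }
  apply (Rmult_lt_reg_l kappa); [exact Hkappa | nra].
Qed.
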